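(* Let $S$ be a proper restriction semigroup, and let $\cdot$ and $\circ$ be its underlying left and right partial actions of $S/\sigma$ on $P(S)$. Then: (1) $S$ satisfies condition $\mathrm{(EP)^r}$: for all $s,t,u\in S$, if $s\,\sigma\, tu$ then there exists $v\in S$ with $t^+s=tv$ and $u\,\sigma\, v$ — if and only if $\circ$ is strong; (2) $S$ satisfies condition $\mathrm{(EP)^l}$: for all $s,t,u\in S$, if $s\,\sigma\, ut$ then there exists $v\in S$ with $st^*=vt$ and $u\,\sigma\, v$ — if and only if $\cdot$ is strong.
   Context: A restriction semigroup is an algebra $(S,\cdot,{}^*,{}^+)$ where $(S,\cdot)$ is a semigroup and the identities $xx^*=x$, $x^*y^*=y^*x^*$, $(xy^* )^*=x^*y^*$, $x^*y=y(xy)^*$, $x^+x=x$, $x^+y^+=y^+x^+$, $(x^+y)^+=x^+y^+$, $xy^+=(xy)^+x$, $(x^+)^*=x^+$, $(x^* )^+=x^*$ hold. $P(S)=\{x^*\colon x\in S\}$ is the semilattice of projections; $\sigma$ is the least congruence identifying all projections; $S$ is proper if ($a^*=b^*$, $a\,\sigma\,b$) $\Rightarrow a=b$ and ($a^+=b^+$, $a\,\sigma\,b$) $\Rightarrow a=b$. Underlying partial actions: for $t\in S/\sigma$ and $e\in P(S)$, $t\cdot e$ is defined iff there is $a\in t$ with $a^*\ge e$, and then $t\cdot e=(ae)^+$; $e\circ t$ is defined iff there is $a\in t$ with $a^+\ge e$... equivalently $e\circ t$ is defined iff $e=t\cdot f$ for some $f$, and then $e\circ t=f$. A left partial action $\cdot$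 of a monoid $T$ is strong if for all $s,t\in T$ and $y$: whenever $t\cdot y$ and $(st)\cdot y$ are defined, $s\cdot(t\cdot y)$ is defined. A right partial action $\circ$ is strong if whenever $y\circ s$ and $y\circ(st)$ are defined, $(y\circ s)\circ t$ is defined. *)

Set Implicit Arguments.

Section Restriction.
Variable S : Type.
Variable mul : S -> S -> S.
Variable st : S -> S.
Variable pl : S -> S.

Definition is_restriction_semigroup : Prop :=
  (forall x y z, mul (mul x y) z = mul x (mul y z)) /\
  (forall x, mul x (st x) = x) /\
  (forall x y, mul (st x) (st y) = mul (st y) (st x)) /\
  (forall x y, st (mul x (st y)) = mul (st x) (st y)) /\
  (forall x y, mul (st x) y = mul y (st (mul x y))) /\
  (forall x, mul (pl x) x = x) /\
  (forall x y, mul (pl x) (pl y) = mul (pl y) (pl x)) /\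
  (forall x y, pl (mul (pl x) y) = mul (pl x) (pl y)) /\
  (forall x y, mul x (pl y) = mul (pl (mul x y)) x) /\
  (forall x, st (pl x) = pl x) /\
  (forall x, pl (st x) = st x).

Definition proj (e : S) : Prop := exists x, e = st x.

Definition proj_le (e f : S) : Prop := e = mul e f.

Definition is_congruence (R : S -> S -> Prop) : Prop :=
  (forall a, R a a) /\ (forall a b, R a b -> R b a) /\
  (forall a b c, R a b -> R b c -> R a c) /\
  (forall a b c, R a b -> R (mul c a) (mul c b)) /\
  (forall a b c, R a b -> R (mul a c) (mul b c)).

Definition sigma (a b : S) : Prop :=
  forall R, is_congruence R -> (forall e f, proj e -> proj f -> R e f) -> R a b.

Definition proper : Prop :=
  (forall a b, st a = st b -> sigma a b -> a = b) /\
  (forall a b, pl a = pl b -> sigma a b -> a = b).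

(* Elements of S/sigma are represented by elements c of S (the class of c);
   "a in t" means sigma a c.
   lact c e f  :<->  (class of c) . e is defined and equals f,
   i.e. e is a projection, there is a in the class of c with a^* >= e,
   and f = (a e)^+. *)
Definition lact (c e f : S) : Prop :=
  proj e /\ exists a, sigma a c /\ proj_le e (st a) /\ f = pl (mul a e).

(* ract e c f  :<->  e o (class of c) is defined and equals f,
   i.e. f is a projection with (class of c) . f = e. *)
Definition ract (e c f : S) : Prop := proj e /\ lact c f e.

Definition lact_strong : Prop :=
  forall s t y, proj y ->
    (exists f, lact t y f) -> (exists g, lact (mul s t) y g) ->
    forall f, lact t y f -> exists h, lact s f h.

Definition ract_strong : Prop :=
  forall s t y, proj y ->
    (exists f, ract y s f) -> (exists g, ract y (mul s t) g) ->
    forall f, ract y s f -> exists h, ract f t h.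

Definition EP_r : Prop :=
  forall s t u, sigma s (mul t u) ->
    exists v, mul (pl t) s = mul t v /\ sigma u v.

Definition EP_l : Prop :=
  forall s t u, sigma s (mul u t) ->
    exists v, mul s (st t) = mul v t /\ sigma u v.

End Restriction.

From Stdlib Require Import Setoid.

(* In a restriction semigroup [c . e = f] holds iff some [a] in the
   sigma-class of [c] has [a^* = e] and [a^+ = f]; so strongness of the partial
   actions and the (EP) conditions both speak about factorisations inside
   sigma-classes.  For (1), given witnesses [a] of [y o s = f] and [c] of
   [y o (st)], (EP)^r applied to [c sigma a t] gives [c = a v] with [v sigma t];
   since [(a v)^+ = a^+] we get [a v^+ = a], hence [a^* <= v^+], and [a^* v]
   witnesses that [f o t] is defined.  Conversely, with [y = t^+ s^+], the
   actions [y o t] and [y o (tu)] are defined, so strongness yields [b sigma u]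
   with [b^+ = (y t)^*]; then [t^+ s] and [t b] share both their sigma-class and
   their [^+], and properness makes them equal.  (2) is the left-right dual. *)

Section RestrictionSemigroup.
Variables (S : Type) (mul : S -> S -> S) (st pl : S -> S).

Local Infix "⋅" := mul (at level 40, left associativity).
Local Notation "a ≈ b" := (sigma mul st a b) (at level 70).

Lemma sigma_sym {a b} : a ≈ b -> b ≈ a.
Proof.
  intros Hab R HR Hp. pose proof HR as (_ & Hsym & _). apply Hsym, Hab; assumption.
Qed.

Lemma sigma_trans {a b c} : a ≈ b -> b ≈ c -> a ≈ c.
Proof.
  intros Hab Hbc R HR Hp. pose proof HR as (_ & _ & Htrans & _).
  apply Htrans with b; [apply Hab | apply Hbc]; assumption.
Qed.

Lemma sigma_mull {a b} c : a ≈ b -> c ⋅ a ≈ c ⋅ b.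
Proof.
  intros Hab R HR Hp. pose proof HR as (_ & _ & _ & Hl & _). apply Hl, Hab; assumption.
Qed.

Lemma sigma_mulr {a b} c : a ≈ b -> a ⋅ c ≈ b ⋅ c.
Proof.
  intros Hab R HR Hp. pose proof HR as (_ & _ & _ & _ & Hr). apply Hr, Hab; assumption.
Qed.

Lemma sigma_proj e f : proj st e -> proj st f -> e ≈ f.
Proof. intros He Hf R _ Hp. exact (Hp e f He Hf). Qed.

Lemma proj_st x : proj st (st x).
Proof. exists x. reflexivity. Qed.

Hypothesis HS : is_restriction_semigroup mul st pl.

Lemma mulA x y z : x ⋅ y ⋅ z = x ⋅ (y ⋅ z).
Proof. destruct HS as (H & _). apply H. Qed.

Lemma mul_st x : x ⋅ st x = x.
Proof. destruct HS as (_ & H & _). apply H. Qed.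

Lemma st_comm x y : st x ⋅ st y = st y ⋅ st x.
Proof. destruct HS as (_ & _ & H & _). apply H. Qed.

Lemma st_mul_st x y : st (x ⋅ st y) = st x ⋅ st y.
Proof. destruct HS as (_ & _ & _ & H & _). apply H. Qed.

Lemma st_ample x y : st x ⋅ y = y ⋅ st (x ⋅ y).
Proof. destruct HS as (_ & _ & _ & _ & H & _). apply H. Qed.

Lemma pl_mul x : pl x ⋅ x = x.
Proof. destruct HS as (_ & _ & _ & _ & _ & H & _). apply H. Qed.

Lemma pl_pl_mul x y : pl (pl x ⋅ y) = pl x ⋅ pl y.
Proof. destruct HS as (_ & _ & _ & _ & _ & _ & _ & H & _). apply H. Qed.

Lemma pl_ample x y : x ⋅ pl y = pl (x ⋅ y) ⋅ x.
Proof. destruct HS as (_ & _ & _ & _ & _ & _ & _ & _ & H & _). apply H. Qed.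

Lemma st_pl x : st (pl x) = pl x.
Proof. destruct HS as (_ & _ & _ & _ & _ & _ & _ & _ & _ & H & _). apply H. Qed.

Lemma pl_st x : pl (st x) = st x.
Proof. destruct HS as (_ & _ & _ & _ & _ & _ & _ & _ & _ & _ & H). apply H. Qed.

Lemma proj_pl x : proj st (pl x).
Proof. exists (pl x). symmetry. apply st_pl. Qed.

Lemma proj_stE {e} : proj st e -> st e = e.
Proof. intros [x ->]. rewrite <- (pl_st x), st_pl. reflexivity. Qed.

Lemma proj_plE {e} : proj st e -> pl e = e.
Proof. intros [x ->]. apply pl_st. Qed.

Lemma proj_idem e : proj st e -> e ⋅ e = e.
Proof. intros [x ->]. rewrite <- st_mul_st, mul_st. reflexivity. Qed.

Lemma proj_comm e f : proj st e -> proj st f -> e ⋅ f = f ⋅ e.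
Proof. intros [x ->] [y ->]. apply st_comm. Qed.

Lemma proj_mul e f : proj st e -> proj st f -> proj st (e ⋅ f).
Proof. intros [x ->] [y ->]. exists (x ⋅ st y). symmetry. apply st_mul_st. Qed.

Lemma st_mul_proj x e : proj st e -> st (x ⋅ e) = st x ⋅ e.
Proof. intros [y ->]. apply st_mul_st. Qed.

Lemma pl_proj_mul e x : proj st e -> pl (e ⋅ x) = e ⋅ pl x.
Proof. intros He. rewrite <- (proj_plE He) at 1 2. apply pl_pl_mul. Qed.

Lemma proj_ample e x : proj st e -> e ⋅ x = x ⋅ st (e ⋅ x).
Proof. intros He. rewrite <- (proj_stE He) at 1. apply st_ample. Qed.

Lemma mul_proj_ample x e : proj st e -> x ⋅ e = pl (x ⋅ e) ⋅ x.
Proof. intros He. rewrite <- (proj_plE He) at 1. apply pl_ample. Qed.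

Lemma st_mul_le x y : st (x ⋅ y) = st (x ⋅ y) ⋅ st y.
Proof. rewrite <- st_mul_st, mulA, mul_st. reflexivity. Qed.

Lemma pl_mul_le x y : pl (x ⋅ y) = pl x ⋅ pl (x ⋅ y).
Proof. rewrite <- pl_pl_mul, <- mulA, pl_mul. reflexivity. Qed.

Lemma st_st_mul x y : st (st x ⋅ y) = st (x ⋅ y).
Proof.
  rewrite st_ample, st_mul_st, st_comm. symmetry. apply st_mul_le.
Qed.

Lemma pl_mul_pl x y : pl (x ⋅ pl y) = pl (x ⋅ y).
Proof.
  rewrite pl_ample, pl_pl_mul, proj_comm by apply proj_pl. symmetry. apply pl_mul_le.
Qed.

Lemma sigma_mul_proj x {e} : proj st e -> x ⋅ e ≈ x.
Proof.
  intros He. rewrite <- (mul_st x) at 2. apply sigma_mull, sigma_proj; [exact He | apply proj_st].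
Qed.

Lemma sigma_proj_mul {e} x : proj st e -> e ⋅ x ≈ x.
Proof.
  intros He. rewrite <- (pl_mul x) at 2. apply sigma_mulr, sigma_proj; [exact He | apply proj_pl].
Qed.

Lemma lact_iff c e f :
  lact mul st pl c e f <-> exists a, a ≈ c /\ st a = e /\ pl a = f.
Proof.
  split.
  - intros (He & a & Hac & Hle & ->). exists (a ⋅ e). repeat split.
    + exact (sigma_trans (sigma_mul_proj a He) Hac).
    + rewrite st_mul_proj, proj_comm by (apply proj_st || exact He). symmetry. exact Hle.
  - intros (a & Hac & <- & <-). split; [apply proj_st |]. exists a. repeat split.
    + exact Hac.
    + symmetry. apply proj_idem, proj_st.
    + rewrite mul_st. reflexivity.
Qed.

Lemma ract_iff e c f :
  ract mul st pl e c f <-> exists a, a ≈ c /\ st a = f /\ pl a = e.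
Proof.
  unfold ract. rewrite lact_iff. split; [intros [_ H]; exact H |].
  intros H. split; [| exact H]. destruct H as (a & _ & _ & <-). apply proj_pl.
Qed.

Lemma EP_r_ract_strong : EP_r mul st pl -> ract_strong mul st pl.
Proof.
  intros HE s t y _ _ [g Hg] f Hf.
  apply ract_iff in Hf as (a & Has & <- & Hay).
  apply ract_iff in Hg as (c & Hcs & _ & Hcy).
  destruct (HE c a t) as (v & Hv & Htv).
  { exact (sigma_trans Hcs (sigma_mulr t (sigma_sym Has))). }
  assert (Hc : c = a ⋅ v) by (rewrite Hay, <- Hcy, pl_mul in Hv; exact Hv).
  assert (Ha : a ⋅ pl v = a) by (rewrite pl_ample, <- Hc, Hcy, <- Hay; apply pl_mul).
  assert (Hle : st a = st a ⋅ pl v).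
  { rewrite <- st_mul_proj, Ha by apply proj_pl. reflexivity. }
  exists (st (st a ⋅ v)). apply ract_iff. exists (st a ⋅ v). repeat split.
  - exact (sigma_trans (sigma_proj_mul v (proj_st a)) (sigma_sym Htv)).
  - rewrite pl_proj_mul by apply proj_st. symmetry. exact Hle.
Qed.

Lemma ract_strong_EP_r :
  (forall a b, pl a = pl b -> a ≈ b -> a = b) ->
  ract_strong mul st pl -> EP_r mul st pl.
Proof.
  intros Hproper HR s t u Hs.
  set (y := pl t ⋅ pl s).
  assert (Hy : proj st y) by (apply proj_mul; apply proj_pl).
  assert (Hyt : y ⋅ pl t = y).
  { unfold y. rewrite mulA, (proj_comm (pl s)), <- mulA, proj_idem by apply proj_pl.
    reflexivity. }
  assert (Hys : y ⋅ pl s = y) by (unfold y; rewrite mulA, proj_idem by apply proj_pl; reflexivity).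
  assert (Ft : ract mul st pl y t (st (y ⋅ t))).
  { apply ract_iff. exists (y ⋅ t). repeat split.
    - apply sigma_proj_mul, Hy.
    - rewrite pl_proj_mul by exact Hy. exact Hyt. }
  assert (Fs : ract mul st pl y (t ⋅ u) (st (y ⋅ s))).
  { apply ract_iff. exists (y ⋅ s). repeat split.
    - exact (sigma_trans (sigma_proj_mul s Hy) Hs).
    - rewrite pl_proj_mul by exact Hy. exact Hys. }
  destruct (HR t u y Hy (ex_intro _ _ Ft) (ex_intro _ _ Fs) _ Ft) as [h Hh].
  apply ract_iff in Hh as (b & Hbu & _ & Hb).
  exists b. split; [| exact (sigma_sym Hbu)].
  apply Hproper.
  - rewrite <- (pl_mul_pl t b), Hb, <- proj_ample, !pl_proj_mul by (exact Hy || apply proj_pl).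
    rewrite Hyt. reflexivity.
  - apply (sigma_trans (b := s)); [apply sigma_proj_mul, proj_pl |].
    exact (sigma_trans Hs (sigma_mull t (sigma_sym Hbu))).
Qed.

Lemma EP_l_lact_strong : EP_l mul st -> lact_strong mul st pl.
Proof.
  intros HE s t y _ _ [g Hg] f Hf.
  apply lact_iff in Hf as (a & Hat & Hay & <-).
  apply lact_iff in Hg as (b & Hbs & Hby & _).
  destruct (HE b a s) as (v & Hv & Hsv).
  { exact (sigma_trans Hbs (sigma_mull s (sigma_sym Hat))). }
  assert (Hb : b = v ⋅ a) by (rewrite Hay, <- Hby, mul_st in Hv; exact Hv).
  assert (Ha : st v ⋅ a = a) by (rewrite st_ample, <- Hb, Hby, <- Hay; apply mul_st).
  exists (pl (v ⋅ pl a)). apply lact_iff. exists (v ⋅ pl a). repeat split.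
  - exact (sigma_trans (sigma_mul_proj v (proj_pl a)) (sigma_sym Hsv)).
  - rewrite st_mul_proj, <- pl_proj_mul, Ha by (apply proj_pl || apply proj_st).
    reflexivity.
Qed.

Lemma lact_strong_EP_l :
  (forall a b, st a = st b -> a ≈ b -> a = b) ->
  lact_strong mul st pl -> EP_l mul st.
Proof.
  intros Hproper HL s t u Hs.
  set (y := st s ⋅ st t).
  assert (Hy : proj st y) by (apply proj_mul; apply proj_st).
  assert (Hty : st t ⋅ y = y).
  { unfold y. rewrite (proj_comm (st s)), <- mulA, proj_idem by apply proj_st.
    reflexivity. }
  assert (Hsy : st s ⋅ y = y) by (unfold y; rewrite <- mulA, proj_idem by apply proj_st; reflexivity).
  assert (Ft : lact mul st pl t y (pl (t ⋅ y))).
  { apply lact_iff. exists (t ⋅ y). repeat split.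
    - apply sigma_mul_proj, Hy.
    - rewrite st_mul_proj by exact Hy. exact Hty. }
  assert (Fs : lact mul st pl (u ⋅ t) y (pl (s ⋅ y))).
  { apply lact_iff. exists (s ⋅ y). repeat split.
    - exact (sigma_trans (sigma_mul_proj s Hy) Hs).
    - rewrite st_mul_proj by exact Hy. exact Hsy. }
  destruct (HL u t y Hy (ex_intro _ _ Ft) (ex_intro _ _ Fs) _ Ft) as [h Hh].
  apply lact_iff in Hh as (b & Hbu & Hb & _).
  exists b. split; [| exact (sigma_sym Hbu)].
  apply Hproper.
  - rewrite <- (st_st_mul b t), Hb, <- mul_proj_ample, !st_mul_proj by (exact Hy || apply proj_st).
    rewrite Hty. reflexivity.
  - apply (sigma_trans (b := s)); [apply sigma_mul_proj, proj_st |].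
    exact (sigma_trans Hs (sigma_mulr t (sigma_sym Hbu))).
Qed.

End RestrictionSemigroup.

Theorem proposition3p7 (S : Type) (mul : S -> S -> S) (st pl : S -> S)
  (HS : is_restriction_semigroup mul st pl) (Hprop : proper mul st pl) :
  (EP_r mul st pl <-> ract_strong mul st pl) /\
  (EP_l mul st <-> lact_strong mul st pl).
Proof.
  destruct Hprop as [Hproper_st Hproper_pl].
  split; split.
  - apply EP_r_ract_strong, HS.
  - apply ract_strong_EP_r; [exact HS | exact Hproper_pl].
  - apply EP_l_lact_strong, HS.
  - apply lact_strong_EP_l; [exact HS | exact Hproper_st].
Qed.
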